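(* Let $X$ and $Y$ be disjoint sets, each of cardinality at least two, and let $M \le \mathrm{Sym}(X)$ and $N \le \mathrm{Sym}(Y)$ be nontrivial permutation groups. Then the box product $M \boxtimes N \le \mathrm{Sym}(V_Y)$ satisfies: (1) $M \boxtimes N$ is transitive on $V_Y$ if and only if $M$ is transitive on $X$; (2) $M \boxtimes N$ is primitive on $V_Y$ if and only if $M$ is primitive but not regular on $X$, and $N$ is transitive on $Y$.
   Context: Permutations act on the left. Let $T$ be the $(|X|,|Y|)$-biregular tree, with its natural bipartition $VT = V_X \sqcup V_Y$, where every vertex of $V_X$ has valency $|X|$ and every vertex of $V_Y$ has valency $|Y|$. An arc is an ordered pair $(u,w)$ of adjacent vertices, with origin $o(u,w)=u$ and terminus $t(u,w)=w$; $AT$ is the set of arcs, $A(v)$ the set of arcs with origin $v$, and $\overline{A}(v)$ the set of arcs with terminus $v$. Automorphisms of $T$ act on arcs in the obvious way. A legal colouring of $X$ and $Y$ is a map $c: AT \to X \cup Y$ such that for every $v \in V_X$ the restriction $c|_{A(v)}: A(v)\to X$ is a bijection, for every $v \in V_Y$ the restriction $c|_{A(v)}: A(v) \to Y$ is a bijection, and for every $v \in VT$ the restriction $c|_{\overline{A}(v)}$ is constant. For a legal colouring $c$, define $U_c(M,N)$ to be the set of $g \in \mathrm{Aut}(T)$ with $gV_X = V_X$ such that $c|_{A(gv)} \circ g|_{A(v)} \circ (c|_{A(v)})^{-1}$ lies in $M$ for all $v \in V_X$ and lies in $N$ for all $v \in V_Y$; this is a subgroup of $\mathrm{Aut}(T)$.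 The box product $M \boxtimes N$ is the subgroup of $\mathrm{Sym}(V_Y)$ induced by $U_c(M,N)$; up to permutation isomorphism it does not depend on the choice of legal colouring $c$. A transitive group is primitive if it preserves no equivalence relation other than the trivial and universal ones; it is regular if transitive with trivial point stabilisers. *)

From mathcomp Require Import ssreflect ssrfun ssrbool seq.

Set Implicit Arguments.
Unset Strict Implicit.
Unset Printing Implicit Defensive.

Definition perm_group (T : Type) (G : (T -> T) -> Prop) : Prop :=
  [/\ G id,
      (forall s, G s -> exists t, [/\ G t, cancel s t & cancel t s]) &
      (forall s t, G s -> G t -> G (s \o t))].

Definition nontrivial_group (T : Type) (G : (T -> T) -> Prop) : Prop :=
  exists s, G s /\ exists x, s x <> x.

Definition perm_transitive (T : Type) (G : (T -> T) -> Prop) : Prop :=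
  forall a b : T, exists s, G s /\ s a = b.

Definition preserves (T : Type) (G : (T -> T) -> Prop) (R : T -> T -> Prop) :=
  forall s a b, G s -> R a b -> R (s a) (s b).

Definition equivalence_rel (T : Type) (R : T -> T -> Prop) : Prop :=
  [/\ (forall a, R a a), (forall a b, R a b -> R b a) &
      (forall a b c, R a b -> R b c -> R a c)].

Definition perm_primitive (T : Type) (G : (T -> T) -> Prop) : Prop :=
  perm_transitive G /\
  forall R : T -> T -> Prop, equivalence_rel R -> preserves G R ->
    (forall a b, R a b -> a = b) \/ (forall a b, R a b).

Definition perm_regular (T : Type) (G : (T -> T) -> Prop) : Prop :=
  perm_transitive G /\
  forall s a, G s -> s a = a -> forall b, s b = b.

Fixpoint walk (V : Type) (adj : V -> V -> Prop) (u : V) (s : seq V) : Prop :=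
  match s with
  | [::] => True
  | w :: s' => adj u w /\ walk adj w s'
  end.

Fixpoint nonbacktracking (V : Type) (u : V) (s : seq V) : Prop :=
  match s with
  | w :: ((z :: _) as s') => u <> z /\ nonbacktracking w s'
  | _ => True
  end.

Definition is_tree (V : Type) (adj : V -> V -> Prop) : Prop :=
  [/\ inhabited V,
      (forall u w, adj u w -> adj w u),
      (forall u v, exists s, walk adj u s /\ last u s = v) &
      (forall u s, s <> [::] -> walk adj u s -> nonbacktracking u s ->
         last u s <> u)].

(* [side v = true] means v \in V_X, [side v = false] means v \in V_Y;
   adjacent vertices lie on different sides. *)
Definition is_bipartition (V : Type) (adj : V -> V -> Prop) (side : V -> bool) :=
  forall u w, adj u w -> side u <> side w.

Definition biregular (X Y V : Type) (adj : V -> V -> Prop) (side : V -> bool) :=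
  (forall v, side v = true ->
     exists f : X -> V, (forall x, adj v (f x)) /\ injective f /\
                        (forall w, adj v w -> exists x, f x = w)) /\
  (forall v, side v = false ->
     exists f : Y -> V, (forall y, adj v (f y)) /\ injective f /\
                        (forall w, adj v w -> exists y, f y = w)).

(* Legal colourings.  The disjoint union X \cup Y is modelled by X + Y.    *)
(* An arc is a pair (u,w) with adj u w; a colouring is c : V -> V -> X + Y *)
(* (only its values on arcs matter).                                        *)

Definition legal_colouring (X Y V : Type) (adj : V -> V -> Prop)
    (side : V -> bool) (c : V -> V -> X + Y) : Prop :=
  [/\
      (forall v, side v = true ->
         [/\ (forall w, adj v w -> exists x, c v w = inl x),
             (forall w w', adj v w -> adj v w' -> c v w = c v w' -> w = w') &
             (forall x, exists w, adj v w /\ c v w = inl x)]),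
      (forall v, side v = false ->
         [/\ (forall w, adj v w -> exists y, c v w = inr y),
             (forall w w', adj v w -> adj v w' -> c v w = c v w' -> w = w') &
             (forall y, exists w, adj v w /\ c v w = inr y)]) &
      (forall v u u', adj u v -> adj u' v -> c u v = c u' v)].

Definition tree_aut_pres (V : Type) (adj : V -> V -> Prop) (side : V -> bool)
    (g : V -> V) : Prop :=
  [/\ bijective g,
      (forall u w, adj u w <-> adj (g u) (g w)) &
      (forall v, side (g v) = side v)].

(* local action at v in V_X: the permutation
   c|A(gv) o g|A(v) o (c|A(v))^-1 of X lies in M *)
Definition local_in_X (X Y V : Type) (adj : V -> V -> Prop)
    (c : V -> V -> X + Y) (M : (X -> X) -> Prop) (g : V -> V) (v : V) : Prop :=
  exists s : X -> X, M s /\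
    forall w x, adj v w -> c v w = inl x -> c (g v) (g w) = inl (s x).

Definition local_in_Y (X Y V : Type) (adj : V -> V -> Prop)
    (c : V -> V -> X + Y) (N : (Y -> Y) -> Prop) (g : V -> V) (v : V) : Prop :=
  exists s : Y -> Y, N s /\
    forall w y, adj v w -> c v w = inr y -> c (g v) (g w) = inr (s y).

Definition U_c (X Y V : Type) (adj : V -> V -> Prop) (side : V -> bool)
    (c : V -> V -> X + Y) (M : (X -> X) -> Prop) (N : (Y -> Y) -> Prop)
    (g : V -> V) : Prop :=
  [/\ tree_aut_pres adj side g,
      (forall v, side v = true -> local_in_X adj c M g v) &
      (forall v, side v = false -> local_in_Y adj c N g v)].

Definition VY (V : Type) (side : V -> bool) : Type := {v : V | side v = false}.

Definition box_product (X Y V : Type) (adj : V -> V -> Prop) (side : V -> bool)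
    (c : V -> V -> X + Y) (M : (X -> X) -> Prop) (N : (Y -> Y) -> Prop)
    : (VY side -> VY side) -> Prop :=
  fun f => exists g, U_c adj side c M N g /\
                     forall v : VY side, proj1_sig (f v) = g (proj1_sig v).

Arguments box_product {X Y V} adj side c M N _.

(* Write U for U_c(M,N) and colour v for the colour of the arcs pointing at v.
   A tree with a legal colouring is rebuilt from the colours along
   non-backtracking walks, so every (s,t) in M x N fixing the colour of a
   vertex b is realised by an element of U fixing b and recolouring every
   vertex by (s,t); and an element of U fixing an edge {z,n} can be cut down
   to the identity on the branch at z through n.  Hence U acts on the
   neighbours of an X-vertex as M does and on those of a Y-vertex as N does,
   and transitivity on V_Y is transported along the tree.
   If N is intransitive, M imprimitive or M regular, one gets respectively the
   blocks generated by the stars at Y-coloured vertices of one N-orbit, the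
   blocks generated by sibling pairs whose colours lie in one M-block, and the
   colour classes of V_Y.  Conversely, given a nontrivial block, an element of
   M fixing one point but not another, realised at a suitable vertex z and cut
   down to a branch, puts two neighbours of z in one block; primitivity of M
   spreads this to the whole star at z, transitivity of N to every star, and
   connectivity to all of V_Y. *)

From Pilot Require Import Defs.
From mathcomp Require Import ssreflect ssrfun ssrbool eqtype seq.
From Stdlib Require Import Classical ClassicalEpsilon.
From Stdlib Require Import Relations.Relation_Operators Relations.Operators_Properties.

Set Implicit Arguments.
Unset Strict Implicit.
Unset Printing Implicit Defensive.

Lemma clos_rt_sym (A : Type) (S : A -> A -> Prop) x y :
  (forall x y, S x y -> S y x) ->
  clos_refl_trans A S x y -> clos_refl_trans A S y x.
Proof.
move=> Ssym; elim=> [x' y' /Ssym|x'|x' y' z' _ IH1 _ IH2].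
- exact: rt_step.
- exact: rt_refl.
- exact: rt_trans IH2 IH1.
Qed.

Lemma clos_rt_hom (A B : Type) (S : A -> A -> Prop) (S' : B -> B -> Prop)
    (f : A -> B) x y :
  (forall x y, S x y -> S' (f x) (f y)) ->
  clos_refl_trans A S x y -> clos_refl_trans B S' (f x) (f y).
Proof.
move=> fS; elim=> [x' y' /fS|x'|x' y' z' _ IH1 _ IH2].
- exact: rt_step.
- exact: rt_refl.
- exact: rt_trans IH1 IH2.
Qed.

Lemma exists_neq (T : Type) (a b : T) : a <> b -> forall t : T, exists t', t' <> t.
Proof.
move=> ab t; case: (classic (t = a)) => [->|ta]; last by exists a; apply: nesym.
by exists b; apply: nesym.
Qed.

Section PermGroup.
Variables (T : Type) (M : (T -> T) -> Prop).
Hypotheses (groupM : perm_group M) (primM : perm_primitive M).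

Lemma perm_group_inv s : M s -> exists t, [/\ M t, cancel s t & cancel t s].
Proof. by case: groupM => _ Minv _; apply: Minv. Qed.

Lemma perm_group_id : M id.
Proof. by case: groupM. Qed.

Lemma perm_group_comp s t : M s -> M t -> M (s \o t).
Proof. by case: groupM => _ _; apply. Qed.

Lemma perm_group_comp3 s t u : M s -> M t -> M u -> M (s \o t \o u).
Proof. by move=> Ms Mt Mu; do 2!apply: perm_group_comp => //. Qed.

(* The relation "x = m a and y = m (h a) with h in M_b" is an M-invariant
   equivalence once M_a fixes b; it cannot be universal since that would force
   a = b, so it is trivial, which says M_b fixes a. *)
Lemma prim_stab_sub_sym a b : a <> b ->
    (forall s, M s -> s a = a -> s b = b) ->
  forall s, M s -> s b = b -> s a = a.
Proof.
move=> ab Hab; case: primM => tr pr.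
pose R x y := exists m h, [/\ M m, M h, h b = b, x = m a & y = m (h a)].
have Req : Defs.equivalence_rel R.
  split.
  - move=> x; have [m [Mm ma]] := tr a x.
    by exists m, id; split => //; apply: perm_group_id.
  - move=> x y [m [h [Mm Mh hb -> ->]]].
    have [h' [Mh' hK h'K]] := perm_group_inv Mh.
    exists (m \o h), h'; split => //=; first exact: perm_group_comp.
      by rewrite -{1}hb hK.
    by rewrite h'K.
  - move=> x y z [m [h [Mm Mh hb -> e]]] [m' [h' [Mm' Mh' hb' e' ->]]].
    have [mi [Mmi mK miK]] := perm_group_inv Mm.
    have [hi [Mhi hK hiK]] := perm_group_inv Mh.
    pose t := hi \o mi \o m'.
    have Mt : M t by apply: perm_group_comp3.
    have tb : t b = b by apply: Hab => //; rewrite /t /= -e' e mK hK.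
    exists m, (h \o t \o h'); split => //.
    + exact: perm_group_comp3.
    + by rewrite /= hb' tb hb.
    + by rewrite /t /= hiK miK.
have Rpres : preserves M R.
  move=> s x y Ms [m [h [Mm Mh hb -> ->]]].
  by exists (s \o m), h; split => //; apply: perm_group_comp.
case: (pr R Req Rpres) => [Rtriv|Runiv] s Ms sb.
  by apply/esym/Rtriv; exists id, s; split => //; apply: perm_group_id.
exfalso; have [m [h [Mm Mh hb ma e]]] := Runiv a b.
have [mi [Mmi mK miK]] := perm_group_inv Mm.
have [hi [Mhi hK hiK]] := perm_group_inv Mh.
have mib : mi b = b by rewrite -{1}(Hab _ Mm (esym ma)) mK.
have hib : hi b = b by rewrite -{1}hb hK.
by apply: ab; rewrite -(hK a) -(mK (h a)) -e mib hib.
Qed.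

Lemma prim_stab_eq_regular a b : a <> b ->
  (forall s, M s -> (s a = a <-> s b = b)) -> perm_regular M.
Proof.
move=> ab Hab; case: primM => tr pr.
pose E x y := forall s, M s -> (s x = x <-> s y = y).
have Eeq : Defs.equivalence_rel E.
  split=> [x s _ | x y h s Ms | x y z h1 h2 s Ms] //.
    by split=> /(h s Ms).
  by rewrite h1 //; apply: h2.
have Epres : preserves M E.
  move=> s x y Ms hxy t Mt.
  have [si [Msi sK siK]] := perm_group_inv Ms.
  have Mu : M (si \o t \o s) by apply: perm_group_comp3.
  have conj v : t (s v) = s v <-> si (t (s v)) = v.
    split=> [-> | e]; first exact: sK.
    by rewrite -{2}e siK.
  by rewrite !conj; exact: (hxy _ Mu).
case: (pr E Eeq Epres) => [Etriv|Euniv]; first by case: ab; apply: Etriv.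
by split=> // s x Ms sx y; apply: (proj1 (Euniv x y s Ms)).
Qed.

Lemma prim_nonregular_stab_moves a b : ~ perm_regular M -> a <> b ->
  exists s, [/\ M s, s a = a & s b <> b].
Proof.
move=> nreg ab; apply: NNPP => nex.
have Hab s : M s -> s a = a -> s b = b.
  by move=> Ms sa; apply: NNPP => sb; apply: nex; exists s.
apply/nreg/(prim_stab_eq_regular ab) => s Ms.
by split; [apply: Hab | apply: prim_stab_sub_sym].
Qed.

Lemma regular_agree s t x : perm_regular M -> M s -> M t -> s x = t x ->
  forall y, s y = t y.
Proof.
move=> [_ reg] Ms Mt e y.
have [ti [Mti tK tiK]] := perm_group_inv Mt.
have fixx : (ti \o s) x = x by rewrite /= e tK.
have /= fixy := reg _ _ (perm_group_comp Mti Ms) fixx y.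
by rewrite -{2}fixy tiK.
Qed.

End PermGroup.

Section Tree.
Variables (V : Type) (adj : V -> V -> Prop).
Hypothesis adj_sym : forall u w, adj u w -> adj w u.
Hypothesis nocycle : forall u s, s <> [::] -> walk adj u s ->
  nonbacktracking u s -> last u s <> u.

Implicit Types (u w v z n : V) (s : seq V).

Fixpoint every (P : V -> Prop) s : Prop :=
  if s is x :: s' then P x /\ every P s' else True.

Lemma every_rcons P s v : every P (rcons s v) <-> every P s /\ P v.
Proof. by elim: s => [|w s IH] /=; [tauto | rewrite IH; tauto]. Qed.

Lemma walk_rcons u s v :
  walk adj u (rcons s v) <-> walk adj u s /\ adj (last u s) v.
Proof. by elim: s u => [|w s IH] u /=; [tauto | rewrite IH; tauto]. Qed.

Lemma adj_neq u w : adj u w -> u <> w.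
Proof.
by move=> uw uEw; apply: (nocycle (u := u) (s := [:: w])) => //=; rewrite uEw.
Qed.

Fixpoint penult u s : V :=
  if s is w :: s' then (if s' is [::] then u else penult w s') else u.

Lemma every_penult P u s : P u -> every P s -> P (penult u s).
Proof.
elim: s u => [|w [|z s] IH] u //= Pu [Pw Ps]; exact: IH.
Qed.

Lemma nbt_behead u w s : nonbacktracking u (w :: s) -> nonbacktracking w s.
Proof. by case: s => [|z s] //= []. Qed.

Lemma nbt_rcons u s v :
  nonbacktracking u s -> (s <> [::] -> penult u s <> v) ->
  nonbacktracking u (rcons s v).
Proof.
elim: s u => [|w [|z s] IH] u //= => [_ h | [uz nb] h]; split => //.
- exact: h.
- by apply: IH => // _; apply: h.
Qed.

Lemma nbt_rconsI u s v : nonbacktracking u (rcons s v) -> nonbacktracking u s.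
Proof.
by elim: s u => [|w [|z s] IH] u //= [uz nb]; split => //; apply: IH.
Qed.

Lemma nbt_avoid_start u s :
  walk adj u s -> nonbacktracking u s -> every (fun x => x <> u) s.
Proof.
elim/last_ind: s => [|t x IH] // /walk_rcons [wt tx] nb.
apply/every_rcons; split; first exact/IH/(nbt_rconsI nb).
have := nocycle (u := u) (s := rcons t x); rewrite last_rcons; apply => //.
- by case: (t).
- exact/walk_rcons.
Qed.

(* For a neighbour [n] of [z], [reach_off z n] is the branch of the tree at [z]
   through [n]. *)
Definition step_off z x y := [/\ adj x y, x <> z & y <> z].
Definition reach_off z := clos_refl_trans V (step_off z).

Lemma reach_off_sym z a b : reach_off z a b -> reach_off z b a.
Proof. by apply: clos_rt_sym => x y [/adj_sym]. Qed.

Lemma reach_off_neq z a b : reach_off z a b -> a <> z -> b <> z.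
Proof. by elim=> [x y [] | x | x y w _ IH1 _ IH2] //; auto. Qed.

Lemma reach_off_map (h : V -> V) z a b :
  (forall u w, adj u w -> adj (h u) (h w)) -> injective h -> h z = z ->
  reach_off z a b -> reach_off z (h a) (h b).
Proof.
move=> hadj hinj hz; apply: clos_rt_hom => x y [xy xz yz].
by split; [apply: hadj | move=> /esym; rewrite -hz => /hinj /esym ..].
Qed.

Lemma walk_reach_off z a s : walk adj a s -> a <> z ->
  every (fun x => x <> z) s -> reach_off z a (last a s).
Proof.
elim: s a => [|w s IH] a /=; first by move=> *; apply: rt_refl.
move=> [aw ws] az [wz sz]; apply: rt_trans (IH w ws wz sz).
exact: rt_step.
Qed.

Lemma reach_off_walk z a b : reach_off z a b -> a <> z ->
  exists s, [/\ walk adj a s, last a s = b & every (fun x => x <> z) s].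
Proof.
move=> ab; elim: (clos_rt_rt1n _ _ _ _ ab) => [x|x y w [xy xz yz] _ IH] _.
  by exists [::].
by have [s [ws <- sz]] := IH yz; exists (y :: s).
Qed.

Definition eq_classic (a b : V) : bool :=
  if excluded_middle_informative (a = b) then true else false.

Lemma eq_classicP a b : reflect (a = b) (eq_classic a b).
Proof. by rewrite /eq_classic; case: excluded_middle_informative; constructor. Qed.

Fixpoint reduce u s : seq V :=
  if s is w :: s' then
    match reduce w s' with
    | [::] => [:: w]
    | z :: p => if eq_classic z u then p else w :: z :: p
    end
  else [::].

Lemma reduce_walk u s : walk adj u s -> walk adj u (reduce u s).
Proof.
elim: s u => [|w s IH] u //= [uw /IH]; case: (reduce w s) => [|z p] //=.
by case: eq_classicP => [->|_] /=; tauto.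
Qed.

Lemma reduce_last u s : last u (reduce u s) = last u s.
Proof.
elim: s u => [|w s IH] u //=; rewrite -IH.
by case: (reduce w s) => [|z p] //=; case: eq_classicP => [->|_].
Qed.

Lemma reduce_nbt u s : nonbacktracking u (reduce u s).
Proof.
elim: s u => [|w s IH] u //=; have := IH w.
case: (reduce w s) => [|z p] //=.
by case: eq_classicP => [-> /nbt_behead | /nesym] //.
Qed.

Lemma reduce_every P u s : every P s -> every P (reduce u s).
Proof.
elim: s u => [|w s IH] u //= [Pw /(IH w)]; case: (reduce w s) => [|z p] //=.
by case: eq_classicP => [->|_] /=; tauto.
Qed.

Lemma branch_uniq z n n' : adj z n -> adj z n' -> reach_off z n n' -> n = n'.
Proof.
move=> zn zn' nn'; apply: NNPP => n_neq.
have nz : n <> z by apply/nesym/adj_neq.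
have [s [ws ls sz]] := reach_off_walk nn' nz.
set r := reduce n s.
have wr : walk adj n r := reduce_walk ws.
have lr : last n r = n' by rewrite reduce_last.
have rz : every (fun x => x <> z) r := reduce_every n sz.
have nr : nonbacktracking n r := reduce_nbt n s.
have r0 : r <> [::] by move=> r0; apply: n_neq; rewrite -lr r0.
apply: (nocycle (u := z) (s := rcons (n :: r) z)).
- by case: (r).
- by apply/walk_rcons; split => //=; rewrite lr; apply: adj_sym.
- apply: nbt_rcons => [|_].
    by move: nr rz; case: (r) => [|y r'] //= nr [/nesym yz _].
  by move: r0 rz; case: (r) => [|y r'] //= _; apply: (every_penult (s := y :: r')).
- exact: last_rcons.
Qed.

Lemma nbt_walk_uniq u p q : walk adj u p -> nonbacktracking u p ->
  walk adj u q -> nonbacktracking u q -> last u p = last u q -> p = q.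
Proof.
elim: p u q => [|a p IH] u [|a' q] wp np wq nq //= e.
- by case: (nocycle (u := u) (s := a' :: q)).
- by case: (nocycle (u := u) (s := a :: p)).
have [/= au ap] := nbt_avoid_start wp np.
have [/= au' aq] := nbt_avoid_start wq nq.
case: wp wq => ua wp [ua' wq].
have aa' : a = a'.
  apply: (branch_uniq ua ua'); apply: rt_trans (walk_reach_off wp au ap) _.
  by rewrite e; apply/reach_off_sym/walk_reach_off.
subst a'; congr (_ :: _).
by apply: (IH a) => //; [apply: nbt_behead np | apply: nbt_behead nq].
Qed.

Lemma branch_exit z n u w : adj z n -> reach_off z n u -> ~ reach_off z n w ->
  adj u w -> w = z /\ u = n.
Proof.
move=> zn nu nw uw.
have nz : n <> z by apply/nesym/adj_neq.
have uz : u <> z := reach_off_neq nu nz.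
have wz : w = z.
  apply: NNPP => wz; apply: nw; apply: rt_trans nu (rt_step _ _ _ _ _).
  by split.
by subst w; split => //; apply/esym/(branch_uniq zn (adj_sym uw)).
Qed.

Section Colouring.
Hypothesis connected : forall u v, exists s, walk adj u s /\ last u s = v.

Lemma nbt_first_steps w w' : w <> w' -> (forall n, adj w' n -> n <> w) ->
  exists z n0, [/\ adj w' z, adj z n0, w' <> n0 & reach_off z n0 w].
Proof.
move=> ww' nadj.
have [s [ws ls]] := connected w' w.
move: (reduce_walk ws) (reduce_last w' s) (reduce_nbt w' s); rewrite ls.
case: (reduce w' s) => [|z [|n0 r]] /=.
- by move=> _ /esym.
- by move=> [w'z _] zw; case: (nadj z).
move=> [w'z [zn0 wr]] lr [w'n0 nr].
have [/= n0z rz] := nbt_avoid_start (u := z) (s := n0 :: r) (conj zn0 wr) nr.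
exists z, n0; split => //; rewrite -lr; exact: walk_reach_off.
Qed.

Variables (X Y : Type) (side : V -> bool) (c : V -> V -> X + Y).
Hypotheses (bip : is_bipartition adj side) (legal : legal_colouring adj side c).
Variables (xa : X) (ya : Y).

Definition is_inl (l : X + Y) : bool := if l is inl _ then true else false.

Lemma side_adj u w : adj u w -> side w = ~~ side u.
Proof. by move/bip; case: (side u); case: (side w). Qed.

Lemma side_nbrX z u : side z = true -> adj z u -> side u = false.
Proof. by move=> sz /side_adj ->; rewrite sz. Qed.

Lemma side_nbrY z u : side z = false -> adj z u -> side u = true.
Proof. by move=> sz /side_adj ->; rewrite sz. Qed.

Lemma exists_nbr v : exists w, adj v w.
Proof.
case: legal => LX LY _; case sv: (side v).
  by have [_ _ /(_ xa) [w []]] := LX v sv; exists w.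
by have [_ _ /(_ ya) [w []]] := LY v sv; exists w.
Qed.

Definition nbr v : V :=
  proj1_sig (constructive_indefinite_description _ (exists_nbr v)).

Lemma adj_nbr v : adj v (nbr v).
Proof. exact: proj2_sig (constructive_indefinite_description _ (exists_nbr v)). Qed.

(* The colour of every arc with terminus [v] (legality makes the choice of
   [nbr v] irrelevant). *)
Definition colour v : X + Y := c (nbr v) v.

Lemma colour_arc u v : adj u v -> c u v = colour v.
Proof. by case: legal => _ _ L uv; apply: L => //; apply/adj_sym/adj_nbr. Qed.

Lemma colour_kind w : is_inl (colour w) = ~~ side w.
Proof.
have a := adj_sym (adj_nbr w); rewrite /colour (side_adj a).
case: legal => LX LY _; case su: (side (nbr w)) => /=.
  by have [/(_ _ a) [x ->] _ _] := LX _ su.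
by have [/(_ _ a) [y ->] _ _] := LY _ su.
Qed.

Lemma colour_inj v w w' : adj v w -> adj v w' -> colour w = colour w' -> w = w'.
Proof.
move=> vw vw'; rewrite -(colour_arc vw) -(colour_arc vw').
case: legal => LX LY _; case sv: (side v).
  by have [_ + _] := LX _ sv; apply.
by have [_ + _] := LY _ sv; apply.
Qed.

Lemma exists_nbr_colour v l : is_inl l = side v ->
  exists w, [/\ adj v w, colour w = l & side w = ~~ side v].
Proof.
case: legal => LX LY _.
case: l => [x|y] /= e.
  have [_ _ /(_ x) [w [vw cw]]] := LX _ (esym e).
  by exists w; rewrite -(colour_arc vw) (side_adj vw).
have [_ _ /(_ y) [w [vw cw]]] := LY _ (esym e).
by exists w; rewrite -(colour_arc vw) (side_adj vw).
Qed.

Lemma colour_inl u : side u = false -> exists x : X, colour u = inl x.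
Proof.
by move=> su; move: (colour_kind u); rewrite su; case: (colour u) => // x; exists x.
Qed.

Lemma colour_inr u : side u = true -> exists y : Y, colour u = inr y.
Proof.
by move=> su; move: (colour_kind u); rewrite su; case: (colour u) => // y; exists y.
Qed.

Lemma side_colour_inl u (x : X) : colour u = inl x -> side u = false.
Proof. by move=> e; move: (colour_kind u); rewrite e; case: (side u). Qed.

Lemma side_colour_inr u (y : Y) : colour u = inr y -> side u = true.
Proof. by move=> e; move: (colour_kind u); rewrite e; case: (side u). Qed.

Section Recolour.
Variable f : X + Y -> X + Y.
Hypotheses (f_kind : forall l, is_inl (f l) = is_inl l) (f_inj : injective f).

Fixpoint recolours s s' : Prop :=
  match s, s' with
  | [::], [::] => True
  | w :: s1, w' :: s1' => colour w' = f (colour w) /\ recolours s1 s1'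
  | _, _ => False
  end.

Lemma recolours_exists a a' s : walk adj a s -> side a = side a' ->
  exists s', walk adj a' s' /\ recolours s s'.
Proof.
elim: s a a' => [|w s IH] a a' /=; first by exists [::].
move=> [aw ws] e.
have [w' [a'w' cw' sw']] : exists w', [/\ adj a' w', colour w' = f (colour w)
    & side w' = ~~ side a'].
  by apply: exists_nbr_colour; rewrite f_kind colour_kind (side_adj aw) e negbK.
have [|s' [ws' rs]] := IH _ w' ws.
  by rewrite sw' (side_adj aw) e.
by exists (w' :: s').
Qed.

Lemma recolours_uniq a' s s' t' : walk adj a' s' -> walk adj a' t' ->
  recolours s s' -> recolours s t' -> s' = t'.
Proof.
elim: s a' s' t' => [|w s IH] a' [|w1 s1] [|w2 s2] //=.
move=> [a1 ws1] [a2 ws2] [c1 r1] [c2 r2].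
have e : w1 = w2 by apply: (colour_inj a1 a2); rewrite c1 c2.
by subst w2; congr (_ :: _); apply: (IH w1).
Qed.

Lemma recolours_last a a' s s' : recolours s s' -> colour a' = f (colour a) ->
  colour (last a' s') = f (colour (last a s)).
Proof. by elim: s a a' s' => [|w s IH] a a' [|w' s'] //= [cw rs] _; apply: IH. Qed.

Lemma recolours_rcons s s' w w' : recolours s s' -> colour w' = f (colour w) ->
  recolours (rcons s w) (rcons s' w').
Proof.
by elim: s s' => [|v s IH] [|v' s'] //= [cv rs] e; split => //; apply: IH.
Qed.

Lemma recolours_reduce a a' s s' : walk adj a s -> walk adj a' s' ->
  recolours s s' -> colour a' = f (colour a) ->
  recolours (reduce a s) (reduce a' s').
Proof.
elim: s a a' s' => [|w s IH] a a' [|w' s'] //= [aw ws] [aw' ws'] [cw rs] ca.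
have := IH _ _ _ ws ws' rs cw.
have := reduce_walk ws; have := reduce_walk ws'.
case: (reduce w s) => [|z p]; case: (reduce w' s') => [|z' p'] //=.
move=> [wz' _] [wz _] [cz rp].
have back : (z = a) <-> (z' = a').
  split=> e.
    by subst z; apply: (colour_inj wz' (adj_sym aw')); rewrite cz ca.
  by subst z'; apply: (colour_inj wz (adj_sym aw)); apply: f_inj; rewrite -cz ca.
by case: eq_classicP => e1; case: eq_classicP => e2 //=; exfalso; tauto.
Qed.

(* When [f] fixes the colour of [b], [recolour_rel b] is the graph of the
   automorphism we are after. *)
Definition recolour_rel b u u' := exists s s', [/\ walk adj b s,
  walk adj b s', recolours s s', last b s = u & last b s' = u'].

Lemma recolour_rel_total b u : exists u', recolour_rel b u u'.
Proof.
have [s [ws ls]] := connected b u.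
have [s' [ws' rs]] := recolours_exists ws (erefl (side b)).
by exists (last b s'), s, s'.
Qed.

Lemma recolour_rel_fun b u u1 u2 : colour b = f (colour b) ->
  recolour_rel b u u1 -> recolour_rel b u u2 -> u1 = u2.
Proof.
move=> fb [s [s' [ws ws' rs ls <-]]] [t [t' [wt wt' rt lt <-]]].
have st : reduce b s = reduce b t.
  apply: (nbt_walk_uniq (u := b)); rewrite ?reduce_last ?ls ?lt //;
    by [apply: reduce_walk | apply: reduce_nbt].
have r1 := recolours_reduce ws ws' rs fb; rewrite st in r1.
have r2 := recolours_reduce wt wt' rt fb.
have st' := recolours_uniq (reduce_walk ws') (reduce_walk wt') r1 r2.
by rewrite -(reduce_last b s') -(reduce_last b t') st'.
Qed.

Definition recolour_map b u : V :=
  proj1_sig (constructive_indefinite_description _ (recolour_rel_total b u)).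

Lemma recolour_mapP b u : recolour_rel b u (recolour_map b u).
Proof.
exact: proj2_sig (constructive_indefinite_description _ (recolour_rel_total b u)).
Qed.

Section FixedBase.
Variable b : V.
Hypothesis fb : colour b = f (colour b).

Lemma recolour_map_base : recolour_map b b = b.
Proof. by apply: (recolour_rel_fun fb (recolour_mapP b b)); exists [::], [::]. Qed.

Lemma recolour_map_colour u : colour (recolour_map b u) = f (colour u).
Proof.
by have [s [s' [_ _ rs <- <-]]] := recolour_mapP b u; apply: recolours_last.
Qed.

Lemma recolour_map_adj u w : adj u w -> adj (recolour_map b u) (recolour_map b w).
Proof.
move=> uw; have [s [s' [ws ws' rs ls ls']]] := recolour_mapP b u.
have [w' [uw' cw' _]] : exists w', [/\ adj (recolour_map b u) w',
    colour w' = f (colour w) & side w' = ~~ side (recolour_map b u)].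
  apply: exists_nbr_colour; rewrite f_kind colour_kind (side_adj uw) negbK.
  apply: negb_inj.
  by rewrite -!colour_kind -ls' (recolours_last rs fb) f_kind ls.
suff -> : recolour_map b w = w' by [].
apply: (recolour_rel_fun fb (recolour_mapP b w)).
exists (rcons s w), (rcons s' w'); rewrite !last_rcons; split => //.
- by apply/walk_rcons; rewrite ls.
- by apply/walk_rcons; rewrite ls'.
- exact: recolours_rcons.
Qed.

End FixedBase.
End Recolour.

Lemma recolours_sym f g s s' : cancel f g -> recolours f s s' -> recolours g s' s.
Proof.
move=> fK; elim: s s' => [|w s IH] [|w' s'] //= [cw rs].
by split; [rewrite cw fK | apply: IH].
Qed.

Lemma recolour_aut b f g : cancel f g -> cancel g f ->
    (forall l, is_inl (f l) = is_inl l) -> colour b = f (colour b) ->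
  exists h, [/\ tree_aut_pres adj side h, h b = b &
                forall u, colour (h u) = f (colour u)].
Proof.
move=> fK gK fk fb.
have gk l : is_inl (g l) = is_inl l by rewrite -{2}(gK l) fk.
have gb : colour b = g (colour b) by rewrite {2}fb fK.
have fi := can_inj fK; have gi := can_inj gK.
pose h := recolour_map fk b; pose k := recolour_map gk b.
have hK : cancel h k.
  move=> u; have [s [s' [ws ws' rs ls ls']]] := recolour_mapP fk b u.
  apply: (recolour_rel_fun gi gb (recolour_mapP gk b (h u))).
  by exists s', s; split => //; apply: recolours_sym rs.
have kK : cancel k h.
  move=> u; have [s [s' [ws ws' rs ls ls']]] := recolour_mapP gk b u.
  apply: (recolour_rel_fun fi fb (recolour_mapP fk b (k u))).
  by exists s', s; split => //; apply: recolours_sym rs.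
exists h; split; last 2 first.
- exact: recolour_map_base.
- exact: recolour_map_colour.
split; first by exists k.
  move=> u w; split; first exact: recolour_map_adj.
  by move=> hadj; rewrite -(hK u) -(hK w); apply: recolour_map_adj.
by move=> v; apply: negb_inj; rewrite -!colour_kind recolour_map_colour.
Qed.

Lemma tree_aut_inv h k : tree_aut_pres adj side h -> cancel h k -> cancel k h ->
  tree_aut_pres adj side k.
Proof.
move=> [_ hadj hside] hK kK; split; first by exists h.
  by move=> u w; rewrite -{1}(kK u) -{1}(kK w) -hadj.
by move=> v; rewrite -hside kK.
Qed.

Section Patch.
Variable B : V -> Prop.

Definition patch (h : V -> V) u :=
  if excluded_middle_informative (B u) then u else h u.

Lemma patch_in h u : B u -> patch h u = u.
Proof. by rewrite /patch; case: excluded_middle_informative. Qed.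

Lemma patch_out h u : ~ B u -> patch h u = h u.
Proof. by rewrite /patch; case: excluded_middle_informative. Qed.

Variable h : V -> V.
Hypothesis h_aut : tree_aut_pres adj side h.
Hypothesis h_branch : forall u, B (h u) <-> B u.
Hypothesis h_cut : forall u w, adj u w -> B u -> ~ B w -> h u = u /\ h w = w.

Lemma patch_adj u w : adj u w -> adj (patch h u) (patch h w).
Proof.
case: h_aut => _ hadj _ uw.
case: (classic (B u)) => Bu; case: (classic (B w)) => Bw.
- by rewrite !patch_in.
- by rewrite patch_in // patch_out // (h_cut uw Bu Bw).2.
- by rewrite patch_out // patch_in // (h_cut (adj_sym uw) Bw Bu).2.
- by rewrite !patch_out //; apply: (proj1 (hadj _ _)).
Qed.

Lemma patch_local v : (patch h v = v /\ forall w, adj v w -> patch h w = w) \/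
  (patch h v = h v /\ forall w, adj v w -> patch h w = h w).
Proof.
case: (classic (B v)) => Bv; [left|right]; split.
- exact: patch_in.
- move=> w vw; case: (classic (B w)) => Bw; first exact: patch_in.
  by rewrite patch_out // (h_cut vw Bv Bw).2.
- exact: patch_out.
- move=> w vw; case: (classic (B w)) => Bw; last exact: patch_out.
  by rewrite patch_in // (h_cut (adj_sym vw) Bw Bv).1.
Qed.

End Patch.

Lemma patch_aut B h : tree_aut_pres adj side h -> (forall u, B (h u) <-> B u) ->
    (forall u w, adj u w -> B u -> ~ B w -> h u = u /\ h w = w) ->
  tree_aut_pres adj side (patch B h).
Proof.
move=> haut hB hcut; have [[k hK kK] _ hside] := haut.
have kaut := tree_aut_inv haut hK kK.
have kB u : B (k u) <-> B u by rewrite -{2}(kK u) hB.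
have kcut u w : adj u w -> B u -> ~ B w -> k u = u /\ k w = w.
  move=> uw Bu Bw; have [hu hw] := hcut _ _ uw Bu Bw.
  by rewrite -{1}hu -{1}hw !hK.
have pK h' k' : cancel h' k' -> (forall u, B (h' u) <-> B u) ->
    cancel (patch B h') (patch B k').
  move=> K hB' u; case: (classic (B u)) => Bu; first by rewrite !patch_in.
  by rewrite !patch_out ?hB'.
split.
- by exists (patch B k); apply: pK.
- move=> u w; split; first exact: patch_adj.
  by move/(patch_adj kaut kcut); rewrite !(pK _ _ hK hB).
- by move=> v; case: (patch_local hcut v) => -[-> _].
Qed.

Section LocalAction.
Variables (M : (X -> X) -> Prop) (N : (Y -> Y) -> Prop).
Hypotheses (groupM : perm_group M) (groupN : perm_group N).

Notation U := (U_c adj side c M N).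

Definition colour_perm (s : X -> X) (t : Y -> Y) (l : X + Y) : X + Y :=
  match l with inl x => inl (s x) | inr y => inr (t y) end.

Lemma U_recolour b (s : X -> X) (t : Y -> Y) :
    M s -> N t -> colour b = colour_perm s t (colour b) ->
  exists h, [/\ U h, h b = b & forall u, colour (h u) = colour_perm s t (colour u)].
Proof.
move=> Ms Nt fb.
have [s' [_ sK s'K]] := perm_group_inv groupM Ms.
have [t' [_ tK t'K]] := perm_group_inv groupN Nt.
have [|||h [haut hb hcol]] := @recolour_aut b _ (colour_perm s' t') _ _ _ fb.
- by case=> [x|y] /=; rewrite ?sK ?tK.
- by case=> [x|y] /=; rewrite ?s'K ?t'K.
- by case.
have [_ hadj _] := haut.
have arc u w : adj u w -> c (h u) (h w) = colour_perm s t (c u w).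
  by move=> uw; rewrite !colour_arc ?hcol //; apply: (proj1 (hadj _ _)).
exists h; split => //; split => // v _; [exists s | exists t];
  by split => // w l vw e; rewrite arc // e.
Qed.

Lemma U_id : U id.
Proof.
have M1 := perm_group_id groupM; have N1 := perm_group_id groupN.
split; first by split => //; exists id.
- by move=> v _; exists id.
- by move=> v _; exists id.
Qed.

Lemma U_comp g g' : U g -> U g' -> U (g' \o g).
Proof.
move=> [[bg ag sg] Xg Yg] [[bg' ag' sg'] Xg' Yg'].
split; first split.
- exact: bij_comp.
- by move=> u w /=; rewrite ag ag'.
- by move=> v /=; rewrite sg' sg.
- move=> v sv; have [s1 [Ms1 h1]] := Xg v sv.
  have [s2 [Ms2 h2]] := Xg' (g v) (etrans (sg v) sv).
  exists (s2 \o s1); split; first exact: perm_group_comp.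
  by move=> w x a e /=; apply: h2; [exact: (proj1 (ag _ _) a) | exact: h1].
- move=> v sv; have [s1 [Ns1 h1]] := Yg v sv.
  have [s2 [Ns2 h2]] := Yg' (g v) (etrans (sg v) sv).
  exists (s2 \o s1); split; first exact: perm_group_comp.
  by move=> w y a e /=; apply: h2; [exact: (proj1 (ag _ _) a) | exact: h1].
Qed.

Lemma U_adj g u w : U g -> adj u w -> adj (g u) (g w).
Proof. by case=> [[_ gadj _] _ _] /gadj. Qed.

Lemma U_side g u : U g -> side (g u) = side u.
Proof. by case=> [[_ _ ->] _ _]. Qed.

Lemma U_local_X g z : U g -> side z = true -> exists s : X -> X, M s /\
  forall u x, adj z u -> colour u = inl x -> colour (g u) = inl (s x).
Proof.
move=> gU sz; have [s [Ms hs]] := (let: And3 _ Xg _ := gU in Xg) z sz.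
exists s; split => // u x zu cu.
by rewrite -(colour_arc (U_adj gU zu)); apply: hs; rewrite ?colour_arc.
Qed.

Lemma U_local_Y g z : U g -> side z = false -> exists t : Y -> Y, N t /\
  forall u y, adj z u -> colour u = inr y -> colour (g u) = inr (t y).
Proof.
move=> gU sz; have [t [Nt ht]] := (let: And3 _ _ Yg := gU in Yg) z sz.
exists t; split => // u y zu cu.
by rewrite -(colour_arc (U_adj gU zu)); apply: ht; rewrite ?colour_arc.
Qed.

Lemma U_fix_branch z n0 h : U h -> h z = z -> h n0 = n0 -> adj z n0 ->
  exists g, [/\ U g, forall u, reach_off z n0 u -> g u = u &
                     forall u, ~ reach_off z n0 u -> g u = h u].
Proof.
move=> hU hz hn0 zn0; case: (hU) => haut Xh Yh; case: (haut) => [[k hK kK] hadj _].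
have kadj u w : adj u w -> adj (k u) (k w) by move=> uw; apply/hadj; rewrite !kK.
have kz : k z = z by rewrite -{1}hz hK.
have kn0 : k n0 = n0 by rewrite -{1}hn0 hK.
pose B := reach_off z n0.
have hB u : B (h u) <-> B u.
  rewrite /B; split=> Bu; last first.
    by rewrite -{1}hn0; apply: reach_off_map _ (can_inj hK) hz Bu => v w /hadj.
  by rewrite -(hK u) -kn0; apply: reach_off_map kadj (can_inj kK) kz Bu.
have hcut u w : adj u w -> B u -> ~ B w -> h u = u /\ h w = w.
  by move=> uw Bu Bw; have [-> ->] := branch_exit zn0 Bu Bw uw.
exists (patch B h); split; first split.
- exact: patch_aut haut hB hcut.
- move=> v sv; rewrite /local_in_X; case: (patch_local hcut v) => -[-> loc].
    by exists id; split => [|w x vw]; [apply: perm_group_id | rewrite loc].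
  have [s [Ms hs]] := Xh v sv.
  by exists s; split => // w x vw; rewrite loc //; apply: hs.
- move=> v sv; rewrite /local_in_Y; case: (patch_local hcut v) => -[-> loc].
    by exists id; split => [|w y vw]; [apply: perm_group_id | rewrite loc].
  have [t [Nt ht]] := Yh v sv.
  by exists t; split => // w y vw; rewrite loc //; apply: ht.
- exact: patch_in.
- exact: patch_out.
Qed.

Lemma star_induction (bb : bool) (P : V -> Prop) :
    (forall z u u', side z = ~~ bb -> adj z u -> adj z u' -> P u -> P u') ->
  forall u u', side u = bb -> side u' = bb -> P u -> P u'.
Proof.
move=> step u u' su + Pu.
have [s [ws <-]] := connected u u'.
pose K v := (side v = bb -> P v) /\
            (side v = ~~ bb -> exists w, adj v w /\ P w).
suff [K1 _] : K (last u s) by apply: K1.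
have Ku : K u by split => // e; move: su; rewrite e; case: (bb).
elim: s u ws Ku {Pu su} => [|w s IH] u //= [uw ws] [Ku1 Ku2].
have sw := side_adj uw; apply: IH => //; split => e.
- have su : side u = ~~ bb by move: sw; rewrite e; case: (side u); case: (bb).
  have [w0 [uw0 Pw0]] := Ku2 su.
  exact: step uw0 uw Pw0.
- have su : side u = bb by move: sw; rewrite e; case: (side u); case: (bb).
  by exists u; split; [apply: adj_sym | apply: Ku1].
Qed.

Lemma U_realise_X z (s : X -> X) : M s -> side z = true ->
  exists h, [/\ U h, h z = z, forall u, adj z u -> adj z (h u) &
                forall u x, colour u = inl x -> colour (h u) = inl (s x)].
Proof.
move=> Ms sz; have [y cz] := colour_inr sz.
have fz : colour z = colour_perm s id (colour z) by rewrite cz.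
have [h [hU hz hcol]] := U_recolour Ms (perm_group_id groupN) fz.
exists h; split => // [u zu | u x cu]; last by rewrite hcol cu.
by rewrite -{1}hz; apply: U_adj.
Qed.

Lemma U_realise_Y z (t : Y -> Y) : N t -> side z = false ->
  exists h, [/\ U h, h z = z, forall u, adj z u -> adj z (h u) &
                forall u y, colour u = inr y -> colour (h u) = inr (t y)].
Proof.
move=> Nt sz; have [x cz] := colour_inl sz.
have fz : colour z = colour_perm id t (colour z) by rewrite cz.
have [h [hU hz hcol]] := U_recolour (perm_group_id groupM) Nt fz.
exists h; split => // [u zu | u y cu]; last by rewrite hcol cu.
by rewrite -{1}hz; apply: U_adj.
Qed.

Lemma U_star_transitive_X z u u' : perm_transitive M -> side z = true ->
  adj z u -> adj z u' -> exists g, U g /\ g u = u'.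
Proof.
move=> trM sz zu zu'.
have [x cu] := colour_inl (side_nbrX sz zu).
have [x' cu'] := colour_inl (side_nbrX sz zu').
have [s [Ms sx]] := trM x x'.
have [h [hU _ hadj hcol]] := U_realise_X Ms sz.
exists h; split => //; apply: (colour_inj (hadj _ zu) zu').
by rewrite (hcol _ _ cu) cu' sx.
Qed.

Lemma U_star_transitive_Y z u u' : perm_transitive N -> side z = false ->
  adj z u -> adj z u' -> exists g, U g /\ g u = u'.
Proof.
move=> trN sz zu zu'.
have [y cu] := colour_inr (side_nbrY sz zu).
have [y' cu'] := colour_inr (side_nbrY sz zu').
have [t [Nt ty]] := trN y y'.
have [h [hU _ hadj hcol]] := U_realise_Y Nt sz.
exists h; split => //; apply: (colour_inj (hadj _ zu) zu').
by rewrite (hcol _ _ cu) cu' ty.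
Qed.

Lemma VY_inj (a b : VY side) : proj1_sig a = proj1_sig b -> a = b.
Proof.
by case: a b => [a sa] [b sb] /= e; subst b; rewrite (eq_irrelevance sa sb).
Qed.

Notation box := (box_product adj side c M N).

Lemma box_of_U g : U g ->
  exists f, box f /\ forall a : VY side, proj1_sig (f a) = g (proj1_sig a).
Proof.
move=> gU; have sg (a : VY side) : side (g (proj1_sig a)) = false.
  by rewrite (U_side _ gU); exact: (proj2_sig a).
by exists (fun a => exist (fun v => side v = false) _ (sg a)); split => //; exists g.
Qed.

Lemma box_preserves (S : V -> V -> Prop) :
    (forall g u u', U g -> S u u' -> S (g u) (g u')) ->
  preserves box (fun a b => S (proj1_sig a) (proj1_sig b)).
Proof. by move=> Sinv f a b [g [gU fg]] /=; rewrite !fg; apply: Sinv. Qed.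

Variable v0 : V.

Lemma exists_side bb : exists z, side z = bb.
Proof.
case: (boolP (side v0 == bb)) => [/eqP|ne]; first by exists v0.
exists (nbr v0); rewrite (side_adj (adj_nbr v0)).
by move: ne; case: (side v0); case: bb.
Qed.

Lemma exists_nbrY z (x : X) : side z = true ->
  exists u : VY side, adj z (proj1_sig u) /\ colour (proj1_sig u) = inl x.
Proof.
move=> sz; have [u [zu cu su]] := @exists_nbr_colour z (inl x) (esym sz).
by rewrite sz in su; exists (exist _ u su).
Qed.

Lemma transitive_M_of_box : perm_transitive box -> perm_transitive M.
Proof.
move=> trB x1 x2; have [z sz] := exists_side true.
have [u1 [zu1 cu1]] := exists_nbrY x1 sz.
have [u2 [zu2 cu2]] := exists_nbrY x2 sz.
have [f [[g [gU fg]] fu1]] := trB u1 u2.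
have [s [Ms hs]] := U_local_X gU sz.
exists s; split => //; move: (hs _ _ zu1 cu1).
by rewrite -fg fu1 cu2 => -[].
Qed.

Lemma transitive_box_of_M : perm_transitive M -> perm_transitive box.
Proof.
move=> trM a b.
suff [g [gU gab]] : exists g, U g /\ g (proj1_sig a) = proj1_sig b.
  have [f [bf fg]] := box_of_U gU.
  by exists f; split => //; apply: VY_inj; rewrite fg.
pose P u := exists g, U g /\ g (proj1_sig a) = u.
apply: (@star_induction false P) (proj2_sig a) (proj2_sig b) _.
- move=> z u u' sz zu zu' [g [gU ga]].
  have [h [hU hu]] := U_star_transitive_X trM sz zu zu'.
  by exists (h \o g); split; [apply: U_comp | rewrite /= ga].
- by exists id; split; [apply: U_id|].
Qed.

Lemma exists_coloured l : exists z, colour z = l.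
Proof.
have [w sw] := exists_side (is_inl l).
by have [z [_ cz _]] := exists_nbr_colour (esym sw); exists z.
Qed.

Lemma reach_off_sibling z z1 u u' : adj z1 u -> adj z1 u' ->
  z1 <> z -> u <> z -> u' <> z -> reach_off z u u'.
Proof.
move=> z1u z1u' z1z uz u'z.
apply: rt_trans (rt_step _ _ _ z1 _) (rt_step _ _ _ _ _).
  by split => //; apply: adj_sym.
by split.
Qed.

Lemma reach_off_sibling_chain z (S : V -> V -> Prop) u u' :
    (forall v v', S v v' ->
       exists z1, [/\ adj z1 v, adj z1 v', z1 <> z, v <> z & v' <> z]) ->
  clos_refl_trans V S u u' -> reach_off z u u'.
Proof.
move=> Ssib /(clos_rt_hom (f := id) (S' := reach_off z)) Sreach.
apply: clos_rt_idempotent; apply: Sreach => v v' /Ssib [z1 [z1v z1v' z1z vz v'z]].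
exact: reach_off_sibling z1v z1v' z1z vz v'z.
Qed.

Variables (xb : X) (yb : Y).
Hypotheses (xab : xa <> xb) (yab : ya <> yb).

Lemma exists_siblingsY z : side z = true -> exists u1 u2 : VY side,
  [/\ adj z (proj1_sig u1), adj z (proj1_sig u2), colour (proj1_sig u1) = inl xa,
      colour (proj1_sig u2) = inl xb & u1 <> u2].
Proof.
move=> sz; have [u1 [zu1 cu1]] := exists_nbrY xa sz.
have [u2 [zu2 cu2]] := exists_nbrY xb sz.
by exists u1, u2; split => // e; apply: xab; move: cu1; rewrite e cu2 => -[].
Qed.

(* If [N] is intransitive, joining two siblings whenever their common neighbour
   has a colour in the [N]-orbit of [y1] gives a block system that is neither
   trivial nor universal. *)
Lemma transitive_N_of_primitive_box : perm_primitive box -> perm_transitive N.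
Proof.
move=> [_ primB]; apply: NNPP => ntrN.
have [y1 [y2 y12]] : exists y1 y2, forall t, N t -> t y1 <> y2.
  apply: NNPP => H; apply: ntrN => y y'; apply: NNPP => nt; apply: H.
  by exists y, y' => t Nt ty; apply: nt; exists t.
pose S u u' := exists z t, [/\ adj z u, adj z u', N t & colour z = inr (t y1)].
pose R (a b : VY side) := clos_refl_trans V S (proj1_sig a) (proj1_sig b).
have Req : Defs.equivalence_rel R.
  split=> [a | a b | a b d]; [exact: rt_refl | | exact: rt_trans].
  by apply: clos_rt_sym => u u' [z [t [zu zu' Nt cz]]]; exists z, t.
have Rpres : preserves box R.
  apply: box_preserves => g u u' gU; apply: clos_rt_hom.
  move=> v v' [z [t [zv zv' Nt cz]]].
  have [t' [Nt' ht']] := U_local_Y gU (side_nbrX (side_colour_inr cz) zv).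
  exists (g z), (t' \o t); split; try exact: U_adj.
  - exact: perm_group_comp.
  - exact/ht'/cz/adj_sym.
have siblings y : exists z (u1 u2 : VY side), [/\ colour z = inr y,
    adj z (proj1_sig u1), adj z (proj1_sig u2) & u1 <> u2].
  have [z cz] := exists_coloured (inr y).
  have [u1 [u2 [zu1 zu2 _ _ u12]]] := exists_siblingsY (side_colour_inr cz).
  by exists z, u1, u2.
case: (primB R Req Rpres) => [Rtriv|Runiv].
  have [z [u1 [u2 [cz zu1 zu2 /(_ (Rtriv _ _ _))]]]] := siblings y1; apply.
  by apply: rt_step; exists z, id; split => //; case: groupN.
have [z [u1 [u2 [cz zu1 zu2]]]] := siblings y2; apply.
apply: VY_inj; apply: branch_uniq zu1 zu2 _.
apply: (reach_off_sibling_chain _ (Runiv u1 u2)) => v v' [z1 [t [z1v z1v' Nt cz1]]].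
have sz1 := side_colour_inr cz1; have sz := side_colour_inr cz.
exists z1; split => //.
- by move=> e; move: cz; rewrite -e cz1 => -[]; apply: y12.
- by move=> e; move: (side_adj z1v); rewrite e sz sz1.
- by move=> e; move: (side_adj z1v'); rewrite e sz sz1.
Qed.

Lemma side_inl_nbr z u (x : X) : adj z u -> colour u = inl x -> side z = true.
Proof. by move=> /side_adj su /side_colour_inl; rewrite su; case: (side z). Qed.

Definition sibling_rel (R : X -> X -> Prop) u u' := exists z x x',
  [/\ adj z u, adj z u', colour u = inl x, colour u' = inl x' & R x x'].

(* Along a chain of [sibling_rel R]-steps, the neighbour of [z] whose branch
   contains the current vertex changes only at steps centred at [z], where its
   colour moves within an [R]-class. *)
Lemma sibling_chain_colour (R : X -> X -> Prop) z u u' (x x' : X) :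
    Defs.equivalence_rel R -> adj z u -> adj z u' ->
    colour u = inl x -> colour u' = inl x' ->
  clos_refl_trans V (sibling_rel R) u u' -> R x x'.
Proof.
move=> [Rr Rs Rt] zu zu' cu cu' chain.
pose Q v := exists n x1, [/\ adj z n, reach_off z n v, colour n = inl x1 & R x x1].
suff [n [x1 [zn nu' cn Rx1]]] : Q u'.
  by move: cn Rx1; rewrite (branch_uniq zn zu' nu') cu' => -[->].
elim: (clos_rt_rtn1 _ _ _ _ chain) => [|v v' Svv' _ [n [x1 [zn nv cn Rx1]]]].
  by exists u, x; split => //; apply: rt_refl.
case: Svv' => [z1 [x2 [x3 [z1v z1v' cv cv' Rx23]]]].
have sz1 := side_inl_nbr z1v cv.
case: (classic (z1 = z)) => [ez | z1z].
  subst z1; move: cn Rx1; rewrite (branch_uniq zn z1v nv) cv => -[<-] Rx2.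
  by exists v', x3; split => //; [apply: rt_refl | apply: Rt Rx23].
have sz := side_inl_nbr zu cu.
have neq w (y : X) : colour w = inl y -> w <> z.
  by move=> /side_colour_inl sw e; move: sz; rewrite -e sw.
exists n, x1; split => //; apply: rt_trans nv (reach_off_sibling z1v z1v' z1z _ _).
- exact: neq cv.
- exact: neq cv'.
Qed.

Lemma primitive_M_of_primitive_box : perm_primitive box -> perm_primitive M.
Proof.
move=> [trB primB]; split; first exact: transitive_M_of_box.
move=> R Req Rpres; apply: NNPP => nR.
have [p [q [Rpq pq]]] : exists p q, R p q /\ p <> q.
  apply: NNPP => H; apply: nR; left => p q Rpq; apply: NNPP => pq.
  by apply: H; exists p, q.
have [x [x' nRx]] : exists x x', ~ R x x'.
  apply: NNPP => H; apply: nR; right => x x'; apply: NNPP => nRx.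
  by apply: H; exists x, x'.
case: (Req) => _ Rsym _.
pose T (a b : VY side) := clos_refl_trans V (sibling_rel R) (proj1_sig a) (proj1_sig b).
have Teq : Defs.equivalence_rel T.
  split=> [a | a b | a b d]; [exact: rt_refl | | exact: rt_trans].
  apply: clos_rt_sym => u u' [z [y [y' [zu zu' cu cu' Ryy']]]].
  by exists z, y', y; split => //; apply: Rsym.
have Tpres : preserves box T.
  apply: box_preserves => g u u' gU; apply: clos_rt_hom.
  move=> v v' [z [y [y' [zv zv' cv cv' Ryy']]]].
  have [s [Ms hs]] := U_local_X gU (side_inl_nbr zv cv).
  by exists (g z), (s y), (s y'); split; try exact: U_adj; [apply: hs..|apply: Rpres].
have [z sz] := exists_side true.
have sibling y : exists u : VY side,
    adj z (proj1_sig u) /\ colour (proj1_sig u) = inl y by apply: exists_nbrY.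
case: (primB T Teq Tpres) => [Ttriv|Tuniv].
  have [[u1 [zu1 cu1]] [u2 [zu2 cu2]]] := (sibling p, sibling q).
  have /Ttriv u12 : T u1 u2 by apply: rt_step; exists z, p, q.
  by apply: pq; move: cu1; rewrite u12 cu2 => -[].
have [[u1 [zu1 cu1]] [u2 [zu2 cu2]]] := (sibling x, sibling x').
exact/nRx/(sibling_chain_colour Req zu1 zu2 cu1 cu2 (Tuniv u1 u2)).
Qed.

Lemma regular_U_colour g : perm_regular M -> U g -> exists s : X -> X, M s /\
  forall u x, colour u = inl x -> colour (g u) = inl (s x).
Proof.
move=> regM gU; have [u0 su0] := exists_side false.
have sz0 : side (nbr u0) = true by rewrite (side_adj (adj_nbr u0)) su0.
have [s [Ms hs]] := U_local_X gU sz0.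
exists s; split => // u x cu.
pose P v := forall x, colour v = inl x -> colour (g v) = inl (s x).
apply: (@star_induction false P) su0 (side_colour_inl cu) _ x cu.
- move=> z v v' sz zv zv' Pv y cv'.
  have [x1 cv] := colour_inl (side_nbrX sz zv).
  have [s' [Ms' hs']] := U_local_X gU sz.
  have e : s' x1 = s x1 by move: (Pv _ cv); rewrite (hs' _ _ zv cv) => -[].
  by rewrite (hs' _ _ zv' cv') (regular_agree groupM regM Ms' Ms e).
- by move=> y cu0; apply: hs => //; apply/adj_sym/adj_nbr.
Qed.

(* The walk [w z1 w2 z3 w3] with colours [x1 y x2 y3 x1], where [x2 <> x1] and
   [y3 <> y], does not backtrack, so [w3 <> w]. *)
Lemma exists_same_colour_pairY : exists u u' : VY side,
  u <> u' /\ colour (proj1_sig u) = colour (proj1_sig u').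
Proof.
have [w sw] := exists_side false; have [x1 cw] := colour_inl sw.
pose z1 := nbr w; have wz1 : adj w z1 := adj_nbr w.
have sz1 : side z1 = true by rewrite (side_adj wz1) sw.
have [y cz1] := colour_inr sz1.
have [x2 x21] := exists_neq xab x1; have [y3 y3y] := exists_neq yab y.
have [w2 [z1w2 cw2 sw2]] := @exists_nbr_colour z1 (inl x2) (esym sz1).
rewrite sz1 /= in sw2.
have [z3 [w2z3 cz3 sz3]] := @exists_nbr_colour w2 (inr y3) (esym sw2).
rewrite sw2 /= in sz3.
have [w3 [z3w3 cw3 sw3]] := @exists_nbr_colour z3 (inl x1) (esym sz3).
rewrite sz3 /= in sw3.
exists (exist _ w sw), (exist _ w3 sw3); split; last by rewrite /= cw cw3.
move=> [ww3]; apply: (nocycle (u := w) (s := [:: z1; w2; z3; w3])) => //=.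
split; first by move=> e; move: cw2; rewrite -e cw => -[/esym].
split; first by move=> e; move: cz3; rewrite -e cz1 => -[/esym].
by split => [e|//]; move: cw3; rewrite -e cw2 => -[].
Qed.

Lemma nonregular_M_of_primitive_box : perm_primitive box -> ~ perm_regular M.
Proof.
move=> [_ primB] regM.
pose S u u' := side u = false /\ colour u = colour u'.
pose T (a b : VY side) := S (proj1_sig a) (proj1_sig b).
have Teq : Defs.equivalence_rel T.
  split=> [a | a b | a b d]; rewrite /T /S.
  - by split => //; apply: (proj2_sig a).
  - by move=> [_ e]; split => //; apply: (proj2_sig b).
  - by move=> [sa ->] [].
have Tpres : preserves box T.
  apply: box_preserves => g u u' gU [su cu].
  have [s [Ms hs]] := regular_U_colour regM gU.
  have [x cx] := colour_inl su.
  split; first by rewrite (U_side _ gU).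
  by rewrite (hs _ _ cx) (hs _ _ (etrans (esym cu) cx)).
case: (primB T Teq Tpres) => [Ttriv|Tuniv].
  have [u [u' [uu' cu]]] := exists_same_colour_pairY.
  by apply/uu'/Ttriv; split => //; apply: (proj2_sig u).
have [z sz] := exists_side true.
have [u1 [u2 [_ _ cu1 cu2 _]]] := exists_siblingsY sz.
by case: (Tuniv u1 u2) => _; rewrite cu1 cu2 => -[].
Qed.

Section Blocks.
Variable R : VY side -> VY side -> Prop.
Hypotheses (Req : Defs.equivalence_rel R) (Rpres : preserves box R).

Definition block_rel u u' := exists a b : VY side,
  [/\ proj1_sig a = u, proj1_sig b = u' & R a b].

Definition star_block z := forall u u', adj z u -> adj z u' -> block_rel u u'.

Lemma block_rel_refl u : side u = false -> block_rel u u.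
Proof. by move=> su; case: Req => Rr _ _; exists (exist _ u su), (exist _ u su). Qed.

Lemma block_rel_sym u u' : block_rel u u' -> block_rel u' u.
Proof. by case: Req => _ Rs _ [a [b [<- <- /Rs]]]; exists b, a. Qed.

Lemma block_rel_trans u u' u'' : block_rel u u' -> block_rel u' u'' -> block_rel u u''.
Proof.
case: Req => _ _ Rt [a [b [<- eb Rab]]] [b' [d [eb' <- Rbd]]].
have e : b = b' by apply: VY_inj; rewrite eb eb'.
by subst b'; exists a, d; split => //; apply: Rt Rbd.
Qed.

Lemma block_rel_U g u u' : U g -> block_rel u u' -> block_rel (g u) (g u').
Proof.
move=> gU [a [b [<- <- Rab]]]; have [f [bf fg]] := box_of_U gU.
by exists (f a), (f b); rewrite !fg; split => //; apply: Rpres.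
Qed.

(* Given [w ~ w'], let [z] be the neighbour of [w'] towards [w] and [n0] the
   next vertex.  An element of [M] fixing the colour of [n0] but not that of
   [w'] is realised at [z] and then cut down to the identity on the branch
   through [n0], which contains [w]; it moves [w'] to a sibling [w''], and
   [w' ~ w ~ w'']. *)
Lemma block_rel_siblings : perm_primitive M -> ~ perm_regular M ->
    (exists a b, R a b /\ a <> b) ->
  exists z u u', [/\ side z = true, adj z u, adj z u', u <> u' & block_rel u u'].
Proof.
move=> primM nregM [a [b [Rab ab]]].
pose w := proj1_sig a; pose w' := proj1_sig b.
have sw : side w = false := proj2_sig a; have sw' : side w' = false := proj2_sig b.
have Eww' : block_rel w w' by exists a, b.
have ww' : w <> w' by move=> e; apply/ab/VY_inj.
have nadj n : adj w' n -> n <> w.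
  by move=> /side_adj; rewrite sw' => sn e; move: sn; rewrite e sw.
have [z [n0 [w'z zn0 w'n0 n0w]]] := nbt_first_steps ww' nadj.
have sz : side z = true by rewrite (side_adj w'z) sw'.
have [x0' cn0] := colour_inl (side_nbrX sz zn0).
have [x1 cw'] := colour_inl sw'.
have x01 : x0' <> x1.
  move=> e; apply: w'n0; apply: (colour_inj (adj_sym w'z) zn0).
  by rewrite cn0 cw' e.
have [s [Ms sx0 sx1]] := prim_nonregular_stab_moves groupM primM nregM x01.
have [h [hU hz hadj hcol]] := U_realise_X Ms sz.
have hn0 : h n0 = n0.
  by apply: (colour_inj (hadj _ zn0) zn0); rewrite (hcol _ _ cn0) cn0 sx0.
have [g [gU gin gout]] := U_fix_branch hU hz hn0 zn0.
have w'out : ~ reach_off z n0 w'.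
  by move=> /(branch_uniq zn0 (adj_sym w'z)) /esym.
exists z, w', (h w'); split => //.
- exact: adj_sym.
- exact/hadj/adj_sym.
- by move=> e; apply: sx1; move: (hcol _ _ cw'); rewrite -e cw' => -[].
- apply: block_rel_trans (block_rel_sym Eww') _.
  by rewrite -(gin _ n0w) -(gout _ w'out); apply: block_rel_U.
Qed.

(* The relation induced on the colours of the neighbours of [z] is
   [M]-invariant, because [M] acts on them through [U] fixing [z]. *)
Lemma star_block_of_siblings z u u' : perm_primitive M -> side z = true ->
  adj z u -> adj z u' -> u <> u' -> block_rel u u' -> star_block z.
Proof.
move=> [_ primM] sz zu zu' uu' Euu'.
have nbr_colour x : exists v, [/\ adj z v, colour v = inl x & side v = false].
  by have [v [zv cv]] := @exists_nbr_colour z (inl x) (esym sz); rewrite sz; exists v.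
pose Rz x x' := exists v v', [/\ adj z v, adj z v', colour v = inl x,
                                 colour v' = inl x' & block_rel v v'].
have Rzeq : Defs.equivalence_rel Rz.
  split.
  - move=> x; have [v [zv cv sv]] := nbr_colour x.
    by exists v, v; split => //; apply: block_rel_refl.
  - move=> x x' [v [v' [zv zv' cv cv' Evv']]].
    by exists v', v; split => //; apply: block_rel_sym.
  - move=> x x' x'' [v [v' [zv zv' cv cv' Evv']]] [t [t' [zt zt' ct ct' Ett']]].
    have e : v' = t by apply: (colour_inj zv' zt); rewrite cv' ct.
    by subst t; exists v, t'; split => //; apply: block_rel_trans Ett'.
have Rzpres : preserves M Rz.
  move=> s x x' Ms [v [v' [zv zv' cv cv' Evv']]].
  have [h [hU _ hadj hcol]] := U_realise_X Ms sz.
  exists (h v), (h v'); split; try exact: hadj; try exact: hcol.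
  exact: block_rel_U.
have [x cu] := colour_inl (side_nbrX sz zu).
have [x' cu'] := colour_inl (side_nbrX sz zu').
case: (primM Rz Rzeq Rzpres) => [Rztriv|Rzuniv].
  have xx' : x = x' by apply: Rztriv; exists u, u'.
  by case: uu'; apply: (colour_inj zu zu'); rewrite cu cu' xx'.
move=> v v' zv zv'.
have [y cv] := colour_inl (side_nbrX sz zv).
have [y' cv'] := colour_inl (side_nbrX sz zv').
have [t [t' [zt zt' ct ct' Ett']]] := Rzuniv y y'.
have -> : v = t by apply: (colour_inj zv zt); rewrite cv ct.
have -> : v' = t' by apply: (colour_inj zv' zt'); rewrite cv' ct'.
exact: Ett'.
Qed.

Lemma star_block_spread z : perm_transitive N -> side z = true ->
  star_block z -> forall z', side z' = true -> star_block z'.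
Proof.
move=> trN sz Sz z' sz'; apply: (@star_induction true star_block) sz sz' Sz.
move=> w z1 z2 sw wz1 wz2 Sz1 u u' z2u z2u'.
have [g [gU gz1]] := U_star_transitive_Y trN sw wz1 wz2.
case: (gU) => [[[k gK kK] gadj _] _ _].
have kadj v : adj z2 v -> adj z1 (k v) by rewrite -gz1 -{1}(kK v) -gadj.
by rewrite -(kK u) -(kK u'); apply/(block_rel_U gU)/Sz1; apply: kadj.
Qed.

Lemma block_rel_universal :
  (forall z, side z = true -> star_block z) -> forall a b, R a b.
Proof.
move=> Sall a b.
have : block_rel (proj1_sig a) (proj1_sig b).
  apply: (@star_induction false (block_rel (proj1_sig a)))
    (proj2_sig a) (proj2_sig b) _.
  - by move=> z v v' sz zv zv' Ev; apply: block_rel_trans Ev (Sall _ sz _ _ zv zv').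
  - exact/block_rel_refl/(proj2_sig a).
by move=> [a' [b' [/VY_inj <- /VY_inj <-]]].
Qed.

End Blocks.

Lemma primitive_box : perm_primitive M -> ~ perm_regular M -> perm_transitive N ->
  perm_primitive box.
Proof.
move=> primM nregM trN; split; first exact/transitive_box_of_M/primM.1.
move=> R Req Rpres; case: (classic (forall a b, R a b -> a = b)) => [|Rntriv].
  by left.
right; have Rnt : exists a b, R a b /\ a <> b.
  apply: NNPP => H; apply: Rntriv => a b Rab; apply: NNPP => ab.
  by apply: H; exists a, b.
have [z [u [u' [sz zu zu' uu' Euu']]]] := block_rel_siblings Req Rpres primM nregM Rnt.
apply: (block_rel_universal Req) => z' sz'.
apply: (star_block_spread Rpres trN sz) sz'.
exact: (star_block_of_siblings Req Rpres primM sz zu zu' uu' Euu').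
Qed.

End LocalAction.
End Colouring.
End Tree.

Theorem theorem5p1 (X Y : Type) (M : (X -> X) -> Prop) (N : (Y -> Y) -> Prop) :
  (exists x1 x2 : X, x1 <> x2) ->
  (exists y1 y2 : Y, y1 <> y2) ->
  perm_group M -> perm_group N ->
  nontrivial_group M -> nontrivial_group N ->
  forall (V : Type) (adj : V -> V -> Prop) (side : V -> bool)
         (c : V -> V -> X + Y),
    is_tree adj -> is_bipartition adj side -> biregular X Y adj side ->
    legal_colouring adj side c ->
    (perm_transitive (box_product adj side c M N) <-> perm_transitive M) /\
    (perm_primitive (box_product adj side c M N) <->
       [/\ perm_primitive M, ~ perm_regular M & perm_transitive N]).
Proof.
move=> [xa [xb xab]] [ya [yb yab]] groupM groupN _ _ V adj side c
  [[v0] adj_sym connected nocycle] bip _ legal.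
split; split.
- exact: (transitive_M_of_box adj_sym bip legal xa ya v0).
- exact: (transitive_box_of_M adj_sym nocycle connected bip legal xa ya groupM groupN).
- move=> primB; split.
  + exact: (primitive_M_of_primitive_box adj_sym nocycle bip legal xa ya v0 primB).
  + exact: (nonregular_M_of_primitive_box adj_sym nocycle connected bip legal
      groupM v0 xab yab primB).
  + exact: (transitive_N_of_primitive_box adj_sym nocycle bip legal ya groupN v0
      xab primB).
- case=> primM nregM trN.
  exact: (primitive_box adj_sym nocycle connected bip legal xa ya groupM groupN
    primM nregM trN).
Qed.
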